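(* Let $2\le f_1\le f_2\le\dots\le f_n$ be integers forming a Pinwheel instance whose density $D=\sum_{i=1}^n 1/f_i$ satisfies $D\le 1-3/\sqrt{f_1}$. Then the instance is feasible, i.e., there is an infinite sequence over $\{1,\dots,n\}$ in which, for every $i$, every block of $f_i$ consecutive entries contains at least one occurrence of $i$.
   Context: Pinwheel problem: given integer frequencies $2\le f_1\le\dots\le f_n$, a schedule is an infinite sequence of indices from $\{1,\dots,n\}$ such that for each $i$, any $f_i$ consecutive elements of the sequence include index $i$. The instance is feasible if a schedule exists. Its density is $\sum_i 1/f_i$. *)

From Stdlib Require Import Reals Lra Lia Arith List.
Open Scope R_scope.

(* A Pinwheel instance with n tasks is given by a frequency function
   f : nat -> nat, of which only f 0, ..., f (n-1) matter (task i is index i,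
   0-based, corresponding to task i+1 in the paper). *)

Definition is_schedule (n : nat) (f : nat -> nat) (s : nat -> nat) : Prop :=
  (forall t, (s t < n)%nat) /\
  (forall i t, (i < n)%nat ->
     exists k, (t <= k < t + f i)%nat /\ s k = i).

Definition feasible (n : nat) (f : nat -> nat) : Prop :=
  exists s : nat -> nat, is_schedule n f s.

Definition density (n : nat) (f : nat -> nat) : R :=
  fold_right Rplus 0 (map (fun i => / INR (f i)) (seq 0 n)).

(* Round each frequency down to the form s * 2 ^ a with c <= s < 2 c, and cut the
   sorted tasks into consecutive groups, a group of s tasks with exponent a being
   served round-robin on one residue class of times modulo 2 ^ a; each of its tasks
   then recurs every s * 2 ^ a <= f_i steps.  Read through bit reversal, these
   residue classes become dyadic subintervals of [0, 1) of length 2 ^ -a, which can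
   be laid side by side as soon as the Kraft sum of the 2 ^ -a is at most 1.  A
   potential argument charges 2 ^ -a to the densities of the group's tasks up to a
   factor 1 + 1/c, plus a total telescoping error 2/u with u = 2 ^ a_0.  Taking u a
   power of two near sqrt f_1 and c = f_1 / u, the resulting bound
   (1 + 1/c) D + 2/u <= 1 follows from D <= 1 - 3 / sqrt f_1. *)

From Stdlib Require Import Reals Lra Lia Arith Bool List.

Local Open Scope nat_scope.

Lemma pow2_pos (a : nat) : 0 < 2 ^ a.
Proof. apply Nat.neq_0_lt_0, Nat.pow_nonzero; lia. Qed.

(* The time slots [t] with [rev_bits a t = N]
   form one residue class modulo [2 ^ a], and the class of [N] at level [a]
   splits into the classes of the dyadic interval
   [[N * 2 ^ (b - a), (N + 1) * 2 ^ (b - a))] at level [b >= a]. *)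
Fixpoint rev_bits (a t : nat) : nat :=
  match a with
  | 0 => 0
  | S a' => t mod 2 * 2 ^ a' + rev_bits a' (t / 2)
  end.

Lemma rev_bits_lt (a t : nat) : rev_bits a t < 2 ^ a.
Proof.
  revert t; induction a as [|a IH]; intro t; cbn [rev_bits]; [simpl; lia|].
  rewrite Nat.pow_succ_r'.
  pose proof (IH (t / 2)); pose proof (Nat.mod_upper_bound t 2 ltac:(lia)).
  nia.
Qed.

Lemma rev_bits_add_mul (a t k : nat) : rev_bits a (t + k * 2 ^ a) = rev_bits a t.
Proof.
  revert t k; induction a as [|a IH]; intros t k; cbn [rev_bits]; [reflexivity|].
  rewrite Nat.pow_succ_r', Nat.mul_assoc, (Nat.mul_comm k 2), <- Nat.mul_assoc,
    (Nat.mul_comm 2), Nat.Div0.mod_add, Nat.div_add, IH by lia.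
  reflexivity.
Qed.

Lemma rev_bits_div (a b t : nat) : a <= b -> rev_bits b t / 2 ^ (b - a) = rev_bits a t.
Proof.
  revert b t; induction a as [|a IH]; intros b t Hab.
  - rewrite Nat.sub_0_r; apply Nat.div_small, rev_bits_lt.
  - destruct b as [|b]; [lia|]; cbn [rev_bits].
    replace (S b - S a) with (b - a) by lia.
    replace (2 ^ b) with (2 ^ a * 2 ^ (b - a))
      by (rewrite <- Nat.pow_add_r; f_equal; lia).
    rewrite Nat.mul_assoc, Nat.div_add_l, IH by (apply Nat.pow_nonzero || idtac; lia).
    reflexivity.
Qed.

Lemma rev_bits_surj (a N : nat) : N < 2 ^ a -> exists t, t < 2 ^ a /\ rev_bits a t = N.
Proof.
  revert N; induction a as [|a IH]; intros N HN; [exists 0; simpl in *; lia|].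
  rewrite Nat.pow_succ_r' in HN |- *; pose proof (pow2_pos a).
  destruct (IH (N mod 2 ^ a)) as [t [Ht Hrev]]; [apply Nat.mod_upper_bound; lia|].
  assert (Hhi : N / 2 ^ a < 2) by (apply Nat.Div0.div_lt_upper_bound; lia).
  exists (N / 2 ^ a + t * 2); split; [lia|]; cbn [rev_bits].
  rewrite Nat.Div0.mod_add, Nat.div_add by lia.
  rewrite Nat.mod_small, (Nat.div_small (N / 2 ^ a) 2) by lia.
  rewrite Nat.add_0_l, Hrev.
  pose proof (Nat.div_mod N (2 ^ a) ltac:(lia)); lia.
Qed.

Lemma rev_bits_disjoint (a b N M t : nat) :
  a <= b -> 2 ^ (b - a) * (N + 1) <= M ->
  rev_bits a t = N -> rev_bits b t = M -> False.
Proof.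
  intros Hab HNM HN HM.
  pose proof (rev_bits_div a b t Hab) as Hdiv; rewrite HN, HM in Hdiv.
  assert (N + 1 <= M / 2 ^ (b - a))
    by (apply Nat.div_le_lower_bound; [apply Nat.pow_nonzero|]; lia).
  lia.
Qed.

Lemma window_hits_residue (m r t : nat) :
  r < m -> exists k, t <= k < t + m /\ k mod m = r.
Proof.
  intro Hr; pose proof (Nat.div_mod t m ltac:(lia)).
  pose proof (Nat.mod_upper_bound t m ltac:(lia)).
  destruct (Nat.le_gt_cases (t mod m) r).
  - exists (t + (r - t mod m)); split; [lia|].
    symmetry; apply (Nat.mod_unique _ _ (t / m)); lia.
  - exists (t + (m + r - t mod m)); split; [lia|].
    symmetry; apply (Nat.mod_unique _ _ (t / m + 1)); lia.
Qed.

Lemma window_hits_digits (P s t0 r t : nat) :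
  t0 < P -> r < s ->
  exists k, t <= k < t + s * P /\ k mod P = t0 /\ (k / P) mod s = r.
Proof.
  intros Ht0 Hr.
  destruct (window_hits_residue (P * s) (t0 + P * r) t) as [k [Hk Hmod]]; [nia|].
  exists k; split; [lia|].
  rewrite Nat.Div0.mod_mul_r in Hmod.
  pose proof (Nat.mod_upper_bound k P ltac:(lia)).
  pose proof (Nat.mod_upper_bound (k / P) s ltac:(lia)).
  assert (Hq : (k mod P + P * ((k / P) mod s)) / P = (t0 + P * r) / P) by now rewrite Hmod.
  rewrite !(Nat.mul_comm P), !Nat.div_add, (Nat.div_small (k mod P)), (Nat.div_small t0)
    in Hq by lia.
  assert (Hdigit : (k / P) mod s = r) by lia.
  rewrite Hdigit in Hmod; lia.
Qed.

Definition dyadic_exp (c F : nat) : nat := Nat.log2 (F / c).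
Definition dyadic_len (c F : nat) : nat := F / 2 ^ dyadic_exp c F.

Lemma dyadic_len_bounds (c F : nat) : 1 <= c <= F ->
  c <= dyadic_len c F < 2 * c /\
  dyadic_len c F * 2 ^ dyadic_exp c F <= F < (dyadic_len c F + 1) * 2 ^ dyadic_exp c F.
Proof.
  intros HcF; unfold dyadic_len, dyadic_exp.
  assert (Hq : 1 <= F / c) by (apply Nat.div_le_lower_bound; lia).
  destruct (Nat.log2_spec (F / c) ltac:(lia)) as [Hlo Hhi].
  set (a := Nat.log2 (F / c)) in *; rewrite Nat.pow_succ_r' in Hhi.
  pose proof (Nat.div_mod F c ltac:(lia)); pose proof (Nat.mod_upper_bound F c ltac:(lia)).
  pose proof (pow2_pos a).
  pose proof (Nat.div_mod F (2 ^ a) ltac:(lia)).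
  pose proof (Nat.mod_upper_bound F (2 ^ a) ltac:(lia)).
  assert (c <= F / 2 ^ a) by (apply Nat.div_le_lower_bound; nia).
  assert (F / 2 ^ a < 2 * c) by (apply Nat.Div0.div_lt_upper_bound; nia).
  split; [lia|]; split; nia.
Qed.

Lemma dyadic_exp_mono (c F F' : nat) : F <= F' -> dyadic_exp c F <= dyadic_exp c F'.
Proof. intro; apply Nat.log2_le_mono, Nat.Div0.div_le_mono; lia. Qed.

Lemma dyadic_scale_mono (c F F' : nat) : 1 <= c <= F -> F <= F' ->
  dyadic_len c F * 2 ^ dyadic_exp c F <= dyadic_len c F' * 2 ^ dyadic_exp c F'.
Proof.
  intros HcF HF; pose proof (dyadic_exp_mono c F F' HF) as Hexp.
  destruct (dyadic_len_bounds c F HcF) as [[_ Hlen] _].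
  destruct (dyadic_len_bounds c F' ltac:(lia)) as [[Hlen' _] _].
  destruct (Nat.eq_dec (dyadic_exp c F) (dyadic_exp c F')) as [Heq|Hlt].
  - rewrite Heq; apply Nat.mul_le_mono_r; unfold dyadic_len; rewrite Heq.
    apply Nat.Div0.div_le_mono; lia.
  - assert (2 * 2 ^ dyadic_exp c F <= 2 ^ dyadic_exp c F')
      by (rewrite <- Nat.pow_succ_r'; apply Nat.pow_le_mono_r; lia).
    nia.
Qed.

Lemma dyadic_exp_div_pow2 (a F : nat) : 2 ^ a <= F -> dyadic_exp (F / 2 ^ a) F = a.
Proof.
  intro HF; pose proof (pow2_pos a).
  assert (Hc : 1 <= F / 2 ^ a) by (apply Nat.div_le_lower_bound; lia).
  pose proof (Nat.div_mod F (2 ^ a) ltac:(lia)).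
  pose proof (Nat.mod_upper_bound F (2 ^ a) ltac:(lia)).
  unfold dyadic_exp; apply Nat.log2_unique; [lia|split].
  - apply Nat.div_le_lower_bound; lia.
  - apply Nat.Div0.div_lt_upper_bound; rewrite Nat.pow_succ_r'; nia.
Qed.

Definition pow2_above_sqrt (F : nat) : nat := 2 ^ S (Nat.log2 (Nat.sqrt F)).

Lemma pow2_above_sqrt_le (F : nat) : 4 <= F -> pow2_above_sqrt F <= F.
Proof.
  intro HF; unfold pow2_above_sqrt; set (m := Nat.sqrt F).
  destruct (Nat.sqrt_spec F ltac:(lia)) as [Hm1 Hm2]; fold m in Hm1, Hm2.
  assert (Hm : 2 <= m) by nia.
  destruct (Nat.log2_spec m ltac:(lia)) as [Hlog _]; rewrite Nat.pow_succ_r'; nia.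
Qed.

Local Open Scope R_scope.

Lemma INR_pow2 (e : nat) : INR (2 ^ e) = 2 ^ e.
Proof. rewrite pow_INR; reflexivity. Qed.

Fixpoint rsum (F : nat -> R) (k : nat) : R :=
  match k with
  | O => 0
  | S k' => rsum F k' + F k'
  end.

Lemma density_eq_rsum (n : nat) (f : nat -> nat) :
  density n f = rsum (fun i => / INR (f i)) n.
Proof.
  assert (Hshift : forall l a, fold_right Rplus a l = fold_right Rplus 0 l + a).
  { induction l as [|x l IH]; intro a; simpl; [ring|rewrite IH; ring]. }
  unfold density; induction n as [|n IH]; [reflexivity|].
  rewrite seq_S, map_app, fold_right_app; simpl; rewrite Hshift, IH; ring.
Qed.

Lemma rsum_mono (F : nat -> R) (k k' : nat) :
  (forall i, (i < k')%nat -> 0 <= F i) -> (k <= k')%nat -> rsum F k <= rsum F k'.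
Proof.
  intros HF; induction 1 as [|k' _ IH]; [lra|].
  simpl; specialize (IH (fun i Hi => HF i ltac:(lia))); specialize (HF k' ltac:(lia)); lra.
Qed.

Lemma Rinv_INR_nonneg (k : nat) : 0 <= / INR k.
Proof.
  destruct k as [|k]; [simpl; rewrite Rinv_0; lra|].
  left; apply Rinv_0_lt_compat, lt_0_INR; lia.
Qed.

Lemma density_ge_head (n : nat) (f : nat -> nat) : (1 <= n)%nat -> / INR (f 0%nat) <= density n f.
Proof.
  intro Hn; rewrite density_eq_rsum.
  replace (/ INR (f 0%nat)) with (rsum (fun i => / INR (f i)) 1) by (simpl; ring).
  apply rsum_mono; [intros i _; apply Rinv_INR_nonneg|exact Hn].
Qed.

Lemma rsum_range_ge (F : nat -> R) (m : R) (lo k : nat) :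
  (forall i, (lo <= i < lo + k)%nat -> m <= F i) -> INR k * m <= rsum F (lo + k) - rsum F lo.
Proof.
  induction k as [|k IH]; intro HF; [rewrite Nat.add_0_r; simpl; lra|].
  rewrite Nat.add_succ_r, S_INR; cbn [rsum].
  specialize (IH (fun i Hi => HF i ltac:(lia))); specialize (HF (lo + k)%nat ltac:(lia)); lra.
Qed.

(* Potential of the charging argument, as a function of the normalised scale
   [s * 2 ^ a / (c * u)] of a group (see [group_ratio]). *)
Definition phi (y : R) : R := if Rle_dec y 2 then 3 - y else 2 / y.

Lemma phi_le_2 (y : R) : 1 <= y -> phi y <= 2.
Proof.
  intro Hy; unfold phi; destruct (Rle_dec y 2); [lra|].
  apply Rmult_le_reg_r with y; [lra|]; field_simplify; lra.
Qed.

Lemma phi_ge (v y : R) : 0 <= v <= 1 -> v * y <= 2 -> 0 < y -> v <= phi y.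
Proof.
  intros Hv Hvy Hy; unfold phi; destruct (Rle_dec y 2); [lra|].
  apply Rmult_le_reg_r with y; [lra|]; field_simplify; lra.
Qed.

Lemma phi_drop (v y y' : R) : 0 <= v <= 1 -> v * y <= 2 -> 1 <= y <= y' ->
  v * (1 - y / y') <= phi y - phi y'.
Proof.
  intros Hv Hvy Hyy; unfold phi.
  assert (Hslack : v * (1 - y / y') = v * (y' - y) / y') by (field; lra).
  rewrite Hslack; apply Rmult_le_reg_r with y'; [lra|].
  replace (v * (y' - y) / y' * y') with (v * (y' - y)) by (field; lra).
  destruct (Rle_dec y 2), (Rle_dec y' 2); try lra.
  - nra.
  - replace ((3 - y - 2 / y') * y') with ((3 - y) * y' - 2) by (field; lra); nra.
  - replace ((2 / y - 2 / y') * y') with (2 * (y' - y) / y) by (field; lra).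
    apply Rmult_le_reg_r with y; [lra|].
    replace (2 * (y' - y) / y * y) with (2 * (y' - y)) by (field; lra); nra.
Qed.

Lemma pow2_above_sqrt_bounds (F : nat) : (1 <= F)%nat ->
  sqrt (INR F) <= INR (pow2_above_sqrt F) <= 2 * sqrt (INR F).
Proof.
  intro HF; unfold pow2_above_sqrt; set (m := Nat.sqrt F).
  destruct (Nat.sqrt_spec F ltac:(lia)) as [Hm1 Hm2]; fold m in Hm1, Hm2.
  assert (Hu : (m + 1 <= 2 ^ S (Nat.log2 m) <= 2 * m)%nat).
  { destruct (Nat.log2_spec m ltac:(nia)) as [Hlog1 Hlog2]; rewrite Nat.pow_succ_r' in *; lia. }
  revert Hu; generalize (2 ^ S (Nat.log2 m))%nat; intros u [Hu_lo Hu_hi].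
  apply le_INR in Hm1, Hu_lo, Hu_hi; apply lt_INR in Hm2.
  rewrite !mult_INR, !S_INR, plus_INR in *; simpl INR in *.
  pose proof (sqrt_sqrt (INR F) (pos_INR F)); pose proof (sqrt_pos (INR F)).
  split; nra.
Qed.

Lemma sqrt_head_gt_3 (n : nat) (f : nat -> nat) : (1 <= n)%nat -> (1 <= f 0)%nat ->
  density n f <= 1 - 3 / sqrt (INR (f 0%nat)) -> 3 < sqrt (INR (f 0%nat)).
Proof.
  intros Hn Hf0 Hdens; pose proof (density_ge_head n f Hn).
  assert (Hinv : 0 < / INR (f 0%nat)) by (apply Rinv_0_lt_compat, lt_0_INR; lia).
  assert (Hr : 0 < sqrt (INR (f 0%nat))) by (apply sqrt_lt_R0, lt_0_INR; lia).
  destruct (Rle_lt_dec (sqrt (INR (f 0%nat))) 3) as [Hle|]; [exfalso|assumption].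
  assert (1 <= 3 / sqrt (INR (f 0%nat)))
    by (apply Rmult_le_reg_r with (sqrt (INR (f 0%nat))); [lra|]; field_simplify; lra).
  lra.
Qed.

Lemma sqrt_budget (r U C D : R) :
  3 < r -> r <= U <= 2 * r -> 1 <= C -> r * r <= (C + 1) * U -> D <= 1 - 3 / r ->
  (1 + / C) * D + 2 / U <= 1.
Proof.
  intros Hr HU HC Hrr HD.
  (* The constant 3 is what makes this cubic inequality hold for [r <= U <= 2 r]. *)
  assert (Hcubic : (r - 3) * U * U <= (r * r - U) * (3 * U - 2 * r)).
  { assert (0 <= r * ((U - r) * (2 * r - U) + 2 * U)) by (apply Rmult_le_pos; nra). nra. }
  assert (HCU : (r - 3) * U <= C * (3 * U - 2 * r)) by nra.
  assert (Hbudget : (1 + / C) * (1 - 3 / r) + 2 / U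
                    = 1 + ((r - 3) * U - C * (3 * U - 2 * r)) / (C * r * U))
    by (field; lra).
  assert (((r - 3) * U - C * (3 * U - 2 * r)) / (C * r * U) <= 0).
  { assert (0 < / (C * r * U)) by (apply Rinv_0_lt_compat; nra).
    unfold Rdiv; nra. }
  assert (0 < / C) by (apply Rinv_0_lt_compat; lra).
  assert ((1 + / C) * D <= (1 + / C) * (1 - 3 / r)) by (apply Rmult_le_compat_l; lra).
  lra.
Qed.

Local Open Scope nat_scope.

Section Groups.

Variables (n c : nat) (f : nat -> nat).
Hypothesis c_pos : 1 <= c.
Hypothesis c_le_f : forall i, i < n -> c <= f i.
Hypothesis f_sorted : forall i j, i <= j < n -> f i <= f j.

Fixpoint group_start (g : nat) : nat :=
  match g with
  | 0 => 0
  | S g' => group_start g' + dyadic_len c (f (group_start g'))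
  end.

Definition group_exp (g : nat) : nat := dyadic_exp c (f (group_start g)).
Definition group_len (g : nat) : nat := dyadic_len c (f (group_start g)).

Lemma group_start_S (g : nat) : group_start (S g) = group_start g + group_len g.
Proof. reflexivity. Qed.

Lemma group_start_mono (g h : nat) : g <= h -> group_start g <= group_start h.
Proof. induction 1 as [|h _ IH]; [lia|rewrite group_start_S; lia]. Qed.

Lemma group_len_bounds (g : nat) : group_start g < n ->
  c <= group_len g < 2 * c /\
  group_len g * 2 ^ group_exp g <= f (group_start g) < (group_len g + 1) * 2 ^ group_exp g.
Proof. intro Hg; apply dyadic_len_bounds; split; [|apply c_le_f]; assumption. Qed.

Lemma le_group_start (g : nat) : group_start g < n -> g <= group_start g.
Proof.
  induction g as [|g IH]; intro Hg; [lia|].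
  pose proof (group_start_mono g (S g) (Nat.le_succ_diag_r g)).
  destruct (group_len_bounds g ltac:(lia)) as [[Hlen _] _].
  rewrite group_start_S in *; specialize (IH ltac:(lia)); lia.
Qed.

Lemma exists_group (i : nat) : i < n -> exists g, group_start g <= i < group_start (S g).
Proof.
  intro Hi.
  assert (Hcover : i < group_start (S i)).
  { destruct (Nat.lt_ge_cases (group_start (S i)) n) as [Hact|]; [|lia].
    pose proof (le_group_start (S i) Hact); lia. }
  induction (S i) as [|h IH]; [simpl in Hcover; lia|].
  destruct (Nat.lt_ge_cases i (group_start h)) as [Hlt|Hge]; [exact (IH Hlt)|].
  exists h; lia.
Qed.

Lemma group_exp_mono (g h : nat) : g <= h -> group_start h < n -> group_exp g <= group_exp h.
Proof.
  intros Hgh Hh; apply dyadic_exp_mono, f_sorted.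
  pose proof (group_start_mono g h Hgh); lia.
Qed.

Lemma group_scale_mono (g : nat) : group_start (S g) < n ->
  group_len g * 2 ^ group_exp g <= group_len (S g) * 2 ^ group_exp (S g).
Proof.
  intro Hg; rewrite group_start_S in Hg.
  apply dyadic_scale_mono; [split; [|apply c_le_f]; lia|].
  apply f_sorted; rewrite group_start_S; lia.
Qed.

(* Group [g] is served at the slots [t] with [rev_bits (group_exp g) t = group_offset g]:
   the dyadic intervals of length [2 ^ - group_exp g] are placed side by side. *)
Fixpoint group_offset (g : nat) : nat :=
  match g with
  | 0 => 0
  | S g' => 2 ^ (group_exp (S g') - group_exp g') * (group_offset g' + 1)
  end.

Lemma group_offset_spread (g h : nat) : g < h -> group_start h < n ->
  2 ^ (group_exp h - group_exp g) * (group_offset g + 1) <= group_offset h.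
Proof.
  induction 1 as [|h Hgh IH]; intro Hh; [reflexivity|].
  assert (Hh' : group_start h < n) by (pose proof (group_start_mono h (S h)); lia).
  pose proof (group_exp_mono g h ltac:(lia) Hh').
  pose proof (group_exp_mono h (S h) ltac:(lia) Hh).
  cbn [group_offset].
  replace (group_exp (S h) - group_exp g)
    with ((group_exp (S h) - group_exp h) + (group_exp h - group_exp g)) by lia.
  rewrite Nat.pow_add_r, <- Nat.mul_assoc.
  apply Nat.mul_le_mono_l; specialize (IH Hh'); lia.
Qed.

Definition group_member (g t : nat) : nat :=
  group_start g + (t / 2 ^ group_exp g) mod group_len g.

(* The last group may extend beyond task [n - 1]; its missing members are never served. *)
Definition serves (g t : nat) : bool :=
  (group_start g <? n) && (rev_bits (group_exp g) t =? group_offset g)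
  && (group_member g t <? n).

Lemma serves_spec (g t : nat) : serves g t = true <->
  group_start g < n /\ rev_bits (group_exp g) t = group_offset g /\ group_member g t < n.
Proof. unfold serves; rewrite !andb_true_iff, !Nat.ltb_lt, Nat.eqb_eq; tauto. Qed.

Fixpoint schedule_below (k t : nat) : nat :=
  match k with
  | 0 => 0
  | S k' => if serves k' t then group_member k' t else schedule_below k' t
  end.

Lemma schedule_below_lt (k t : nat) : 1 <= n -> schedule_below k t < n.
Proof.
  intro Hn; induction k as [|k IH]; cbn [schedule_below]; [lia|].
  destruct (serves k t) eqn:Hserv; [|exact IH].
  apply serves_spec in Hserv; tauto.
Qed.

Lemma serves_unique (g h t : nat) : serves g t = true -> serves h t = true -> g = h.
Proof.
  assert (Hlt : forall g h, g < h -> serves g t = true -> serves h t = true -> False).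
  { intros g' h' Hgh Hg Hh; apply serves_spec in Hg, Hh.
    apply (rev_bits_disjoint (group_exp g') (group_exp h') (group_offset g') (group_offset h') t);
      try tauto.
    - apply group_exp_mono; [lia|tauto].
    - apply group_offset_spread; tauto. }
  intros Hg Hh; destruct (Nat.lt_total g h) as [|[|]]; [exfalso; eauto|assumption|exfalso; eauto].
Qed.

Lemma schedule_below_serves (k g t : nat) :
  serves g t = true -> g < k -> schedule_below k t = group_member g t.
Proof.
  intro Hg; induction k as [|k IH]; intro Hgk; [lia|cbn [schedule_below]].
  destruct (serves k t) eqn:Hk.
  - now rewrite (serves_unique g k t Hg Hk).
  - apply IH; destruct (Nat.eq_dec g k); [congruence|lia].
Qed.

Theorem feasible_of_group_offsets : 1 <= n ->
  (forall g, group_start g < n -> group_offset g < 2 ^ group_exp g) -> feasible n f.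
Proof.
  intros Hn Hkraft; exists (schedule_below n); split; [intro; apply schedule_below_lt, Hn|].
  intros i t Hi.
  destruct (exists_group i Hi) as [g Hgi]; rewrite group_start_S in Hgi.
  assert (Hact : group_start g < n) by lia.
  destruct (group_len_bounds g Hact) as [[Hlen _] [Hscale _]].
  destruct (rev_bits_surj (group_exp g) (group_offset g) (Hkraft g Hact)) as [t0 [Ht0 Hrev]].
  destruct (window_hits_digits (2 ^ group_exp g) (group_len g) t0 (i - group_start g) t Ht0)
    as [k [Hk [Hmod Hdigit]]]; [lia|].
  assert (Hmember : group_member g k = i) by (unfold group_member; lia).
  assert (Hserv : serves g k = true).
  { apply serves_spec; rewrite Hmember, (Nat.div_mod_eq k (2 ^ group_exp g)), Hmod,
      Nat.add_comm, Nat.mul_comm, rev_bits_add_mul; tauto. }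
  exists k; split.
  - assert (f (group_start g) <= f i) by (apply f_sorted; lia); nia.
  - rewrite (schedule_below_serves n g k Hserv), Hmember; [reflexivity|].
    pose proof (le_group_start g Hact); lia.
Qed.


Local Open Scope R_scope.

Definition base : R := 2 ^ group_exp 0.
Definition group_scale (g : nat) : R := INR (group_len g) * 2 ^ group_exp g.
Definition group_ratio (g : nat) : R := group_scale g / (INR c * base).
Definition group_share (g : nat) : R := base / 2 ^ group_exp g.
Definition group_weight (g : nat) : R :=
  if (group_start g <? n)%nat then / 2 ^ group_exp g else 0.
Definition group_potential (g : nat) : R :=
  if (group_start g <? n)%nat then phi (group_ratio g) / base else 0.
Definition group_density (g : nat) : R :=
  rsum (fun i => / INR (f i)) (Nat.min (group_start (S g)) n)
  - rsum (fun i => / INR (f i)) (Nat.min (group_start g) n).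

Lemma base_pos : 0 < base.
Proof. apply pow_lt; lra. Qed.

Lemma INR_c_ge_1 : 1 <= INR c.
Proof. apply (le_INR 1); exact c_pos. Qed.

Lemma group_density_nonneg (g : nat) : 0 <= group_density g.
Proof.
  unfold group_density.
  assert (Hle : (Nat.min (group_start g) n <= Nat.min (group_start (S g)) n)%nat)
    by (pose proof (group_start_mono g (S g)); lia).
  pose proof (rsum_mono _ _ _ (fun i _ => Rinv_INR_nonneg (f i)) Hle); lra.
Qed.

Lemma group_freq_bound (g i : nat) : (group_start (S g) < n)%nat ->
  (group_start g <= i < group_start (S g))%nat ->
  (c * f i < (c + 1) * (group_len (S g) * 2 ^ group_exp (S g)))%nat.
Proof.
  intros Hg Hi.
  destruct (group_len_bounds (S g) Hg) as [[Hlen _] [_ Hf]].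
  assert (Hfi : (f i <= f (group_start (S g)))%nat) by (apply f_sorted; lia).
  revert Hlen Hf Hfi; generalize (group_len (S g)) (2 ^ group_exp (S g))%nat; intros; nia.
Qed.

Lemma inv_f_ge_in_group (g i : nat) : (group_start (S g) < n)%nat ->
  (group_start g <= i < group_start (S g))%nat ->
  INR c / ((INR c + 1) * group_scale (S g)) <= / INR (f i).
Proof.
  intros Hg Hi; pose proof INR_c_ge_1.
  pose proof (group_freq_bound g i Hg Hi) as Hnat.
  apply lt_INR in Hnat; rewrite !mult_INR, plus_INR, INR_pow2 in Hnat; simpl INR in Hnat.
  fold (group_scale (S g)) in Hnat.
  assert (0 < INR (f i)) by (apply lt_0_INR; pose proof (c_le_f i); lia).
  replace (INR c / ((INR c + 1) * group_scale (S g)))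
    with (/ ((INR c + 1) * group_scale (S g) / INR c)) by (field; nra).
  apply Rinv_le_contravar; [assumption|].
  apply Rmult_le_reg_r with (INR c); [lra|].
  replace ((INR c + 1) * group_scale (S g) / INR c * INR c)
    with ((INR c + 1) * group_scale (S g)) by (field; lra).
  lra.
Qed.

Lemma group_density_ge (g : nat) : (group_start (S g) < n)%nat ->
  group_scale g / group_scale (S g) * / 2 ^ group_exp g <= (1 + / INR c) * group_density g.
Proof.
  intro Hg; pose proof INR_c_ge_1.
  destruct (group_len_bounds (S g) Hg) as [[Hlen' _] _].
  assert (Hscale' : 0 < group_scale (S g)).
  { unfold group_scale; apply Rmult_lt_0_compat; [apply lt_0_INR; lia|apply pow_lt; lra]. }
  pose proof (rsum_range_ge _ _ (group_start g) (group_len g)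
                (fun i Hi => inv_f_ge_in_group g i Hg Hi)) as Hsum.
  set (S' := group_scale (S g)) in *; clearbody S'.
  unfold group_density; rewrite group_start_S, !Nat.min_l by (rewrite group_start_S in Hg; lia).
  replace (group_scale g / S' * / 2 ^ group_exp g)
    with ((1 + / INR c) * (INR (group_len g) * (INR c / ((INR c + 1) * S'))))
    by (unfold group_scale; field; repeat split; try lra; apply pow_nonzero; lra).
  apply Rmult_le_compat_l; [assert (0 < / INR c) by (apply Rinv_0_lt_compat; lra); lra|lra].
Qed.

Lemma base_le_period (g : nat) : (group_start g < n)%nat -> base <= 2 ^ group_exp g.
Proof. intro Hg; apply Rle_pow; [lra|apply group_exp_mono; [lia|exact Hg]]. Qed.

Lemma group_share_bounds (g : nat) : (group_start g < n)%nat -> 0 <= group_share g <= 1.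
Proof.
  intro Hg; pose proof base_pos; pose proof (pow_lt 2 (group_exp g) ltac:(lra)).
  pose proof (base_le_period g Hg).
  unfold group_share; split; [apply Rlt_le, Rdiv_lt_0_compat; lra|].
  apply Rmult_le_reg_r with (2 ^ group_exp g); [lra|].
  field_simplify; lra.
Qed.

Lemma group_share_ratio (g : nat) : (group_start g < n)%nat ->
  group_share g * group_ratio g <= 2.
Proof.
  intro Hg; destruct (group_len_bounds g Hg) as [[_ Hlen] _].
  pose proof base_pos; pose proof INR_c_ge_1; pose proof (pow_lt 2 (group_exp g) ltac:(lra)).
  apply lt_INR in Hlen; rewrite mult_INR in Hlen; simpl INR in Hlen.
  unfold group_share, group_ratio, group_scale.
  replace (base / 2 ^ group_exp g * (INR (group_len g) * 2 ^ group_exp g / (INR c * base)))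
    with (INR (group_len g) / INR c) by (field; lra).
  apply Rmult_le_reg_r with (INR c); [lra|]; field_simplify; lra.
Qed.

Lemma group_ratio_ge_1 (g : nat) : (group_start g < n)%nat -> 1 <= group_ratio g.
Proof.
  intro Hg; destruct (group_len_bounds g Hg) as [[Hlen _] _].
  pose proof (base_le_period g Hg); pose proof base_pos; pose proof INR_c_ge_1.
  apply le_INR in Hlen.
  unfold group_ratio, group_scale.
  apply Rmult_le_reg_r with (INR c * base); [nra|]; field_simplify; nra.
Qed.

Lemma group_ratio_mono (g : nat) : (group_start (S g) < n)%nat ->
  group_ratio g <= group_ratio (S g).
Proof.
  intro Hg; pose proof base_pos; pose proof INR_c_ge_1.
  apply Rmult_le_compat_r; [left; apply Rinv_0_lt_compat; nra|].
  unfold group_scale; rewrite <- !INR_pow2, <- !mult_INR.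
  apply le_INR, group_scale_mono, Hg.
Qed.

Lemma inv_group_period (g : nat) : / 2 ^ group_exp g = group_share g / base.
Proof.
  pose proof base_pos; unfold group_share; field; split; [apply pow_nonzero|]; lra.
Qed.

Lemma group_charge_last (g : nat) : (group_start g < n)%nat ->
  / 2 ^ group_exp g <= phi (group_ratio g) / base.
Proof.
  intro Hg; pose proof base_pos; pose proof (group_share_bounds g Hg).
  pose proof (group_share_ratio g Hg); pose proof (group_ratio_ge_1 g Hg).
  rewrite inv_group_period; unfold Rdiv.
  apply Rmult_le_compat_r; [left; apply Rinv_0_lt_compat; lra|].
  apply phi_ge; lra.
Qed.

Lemma group_charge (g : nat) : (group_start (S g) < n)%nat ->
  / 2 ^ group_exp g
  <= (1 + / INR c) * group_density g + phi (group_ratio g) / base - phi (group_ratio (S g)) / base.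
Proof.
  intro Hg'; assert (Hg : (group_start g < n)%nat) by (rewrite group_start_S in Hg'; lia).
  pose proof base_pos; pose proof (group_share_bounds g Hg).
  pose proof (group_share_ratio g Hg); pose proof (group_ratio_ge_1 g Hg).
  pose proof (group_ratio_ge_1 (S g) Hg'); pose proof (group_ratio_mono g Hg').
  pose proof (group_density_ge g Hg') as Hdens.
  assert (Hscale' : group_scale (S g) <> 0).
  { intro Hzero; unfold group_ratio in *; rewrite Hzero in *; unfold Rdiv in *; lra. }
  replace (group_scale g / group_scale (S g)) with (group_ratio g / group_ratio (S g))
    in Hdens by (unfold group_ratio; pose proof INR_c_ge_1; field; repeat split; lra).
  rewrite inv_group_period in Hdens |- *.
  assert (Hdrop : group_share g * (1 - group_ratio g / group_ratio (S g)) / base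
                  <= (phi (group_ratio g) - phi (group_ratio (S g))) / base).
  { unfold Rdiv at 1 3; apply Rmult_le_compat_r; [left; apply Rinv_0_lt_compat; lra|].
    apply phi_drop; lra. }
  replace (group_share g * (1 - group_ratio g / group_ratio (S g)) / base)
    with (group_share g / base - group_ratio g / group_ratio (S g) * (group_share g / base))
    in Hdrop by (field; lra).
  replace ((phi (group_ratio g) - phi (group_ratio (S g))) / base)
    with (phi (group_ratio g) / base - phi (group_ratio (S g)) / base) in Hdrop by (field; lra).
  lra.
Qed.

Lemma group_weight_bound (g : nat) :
  group_weight g <= (1 + / INR c) * group_density g + group_potential g - group_potential (S g).
Proof.
  pose proof (group_density_nonneg g); pose proof INR_c_ge_1.
  assert (0 < / INR c) by (apply Rinv_0_lt_compat; lra).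
  assert (0 <= (1 + / INR c) * group_density g) by (apply Rmult_le_pos; lra).
  assert (Hmono : (group_start g <= group_start (S g))%nat) by (apply group_start_mono; lia).
  unfold group_weight, group_potential.
  destruct (Nat.ltb_spec (group_start g) n) as [Hg|Hg];
    destruct (Nat.ltb_spec (group_start (S g)) n) as [Hg'|Hg']; try lia.
  - exact (group_charge g Hg').
  - pose proof (group_charge_last g Hg); lra.
  - lra.
Qed.

Lemma group_weight_sum (G : nat) :
  rsum group_weight G <= (1 + / INR c) * rsum (fun i => / INR (f i)) (Nat.min (group_start G) n)
                         + group_potential 0 - group_potential G.
Proof.
  induction G as [|G IH]; [simpl; lra|].
  pose proof (group_weight_bound G) as Hstep; unfold group_density in Hstep.
  rewrite Rmult_minus_distr_l in Hstep; cbn [rsum]; lra.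
Qed.

Lemma group_weight_active (g : nat) : (group_start g < n)%nat ->
  group_weight g = / 2 ^ group_exp g.
Proof. intro Hg; unfold group_weight; now rewrite (proj2 (Nat.ltb_lt _ _) Hg). Qed.

Lemma group_offset_succ (g : nat) : (group_start g < n)%nat ->
  INR (group_offset g + 1) = 2 ^ group_exp g * rsum group_weight (S g).
Proof.
  induction g as [|g IH]; intro Hg.
  - cbn [group_offset rsum]; rewrite group_weight_active by exact Hg.
    simpl INR; field; apply pow_nonzero; lra.
  - assert (Hg' : (group_start g < n)%nat)
      by (pose proof (group_start_mono g (S g) ltac:(lia)); lia).
    pose proof (group_exp_mono g (S g) ltac:(lia) Hg).
    cbn [group_offset]; rewrite plus_INR, mult_INR, INR_pow2, IH by exact Hg'.
    change (rsum group_weight (S (S g))) with (rsum group_weight (S g) + group_weight (S g)).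
    rewrite group_weight_active by exact Hg.
    replace (2 ^ group_exp (S g)) with (2 ^ (group_exp (S g) - group_exp g) * 2 ^ group_exp g)
      by (rewrite <- pow_add; f_equal; lia).
    simpl INR; field; split; apply pow_nonzero; lra.
Qed.

Lemma group_potential_0_le : group_potential 0 <= 2 / base.
Proof.
  pose proof base_pos; unfold group_potential.
  destruct (Nat.ltb_spec (group_start 0) n) as [H0|];
    [|apply Rlt_le, Rdiv_lt_0_compat; lra].
  unfold Rdiv; apply Rmult_le_compat_r; [left; apply Rinv_0_lt_compat; lra|].
  apply phi_le_2, group_ratio_ge_1, H0.
Qed.

Lemma n_le_group_start_n : (n <= group_start n)%nat.
Proof.
  destruct (Nat.lt_ge_cases (group_start n) n) as [Hlt|]; [|assumption].
  pose proof (le_group_start n Hlt); lia.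
Qed.

Lemma kraft_sum_le : rsum group_weight n <= (1 + / INR c) * density n f + 2 / base.
Proof.
  pose proof (group_weight_sum n) as Hsum; pose proof n_le_group_start_n.
  assert (Hend : group_potential n = 0)
    by (unfold group_potential; destruct (Nat.ltb_spec (group_start n) n); [lia|reflexivity]).
  rewrite Nat.min_r, <- density_eq_rsum, Hend in Hsum by assumption.
  pose proof group_potential_0_le; lra.
Qed.

Theorem feasible_of_density_budget : (1 <= n)%nat ->
  (1 + / INR c) * density n f + 2 / base <= 1 -> feasible n f.
Proof.
  intros Hn Hbudget; apply feasible_of_group_offsets; [exact Hn|]; intros g Hg.
  pose proof (le_group_start g Hg); pose proof kraft_sum_le.
  assert (Hprefix : rsum group_weight (S g) <= rsum group_weight n).
  { apply rsum_mono; [|lia]; intros h _; unfold group_weight.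
    destruct (_ <? _)%nat; [left; apply Rinv_0_lt_compat, pow_lt|]; lra. }
  assert (Hreal : INR (group_offset g + 1) <= INR (2 ^ group_exp g)).
  { rewrite group_offset_succ, INR_pow2 by exact Hg.
    replace (2 ^ group_exp g) with (2 ^ group_exp g * 1) at 2 by ring.
    apply Rmult_le_compat_l; [apply Rlt_le, pow_lt|]; lra. }
  apply INR_le in Hreal; lia.
Qed.

End Groups.

Local Open Scope R_scope.

Theorem mainTheorem2 (n : nat) (f : nat -> nat)
  (Hn : (1 <= n)%nat)
  (Hge2 : forall i, (i < n)%nat -> (2 <= f i)%nat)
  (Hsorted : forall i j, (i <= j < n)%nat -> (f i <= f j)%nat)
  (Hdens : density n f <= 1 - 3 / sqrt (INR (f 0%nat))) :
  feasible n f.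
Proof.
  assert (Hf0 : (1 <= f 0)%nat) by (pose proof (Hge2 0%nat Hn); lia).
  pose proof (sqrt_head_gt_3 n f Hn Hf0 Hdens) as Hr.
  set (f0 := f 0%nat) in *; set (u := pow2_above_sqrt f0); set (c := (f0 / u)%nat).
  pose proof (sqrt_sqrt (INR f0) (pos_INR f0)) as Hrr.
  assert (Hf4 : (4 <= f0)%nat) by (apply INR_le; simpl; nra).
  destruct (pow2_above_sqrt_bounds f0 Hf0) as [Hu1 Hu2]; fold u in Hu1, Hu2.
  pose proof (pow2_above_sqrt_le f0 Hf4) as Hu_f0; fold u in Hu_f0.
  assert (Hu0 : (0 < u)%nat) by apply pow2_pos.
  pose proof (Nat.div_mod f0 u ltac:(lia)); pose proof (Nat.mod_upper_bound f0 u ltac:(lia)).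
  assert (Hc : (1 <= c)%nat) by (apply Nat.div_le_lower_bound; lia).
  apply (feasible_of_density_budget n c f Hc); [|exact Hsorted|exact Hn|].
  - intros i Hi; pose proof (Hsorted 0%nat i ltac:(lia)) as Hfi; fold f0 in Hfi; nia.
  - unfold base, group_exp, c, u, pow2_above_sqrt; cbn [group_start]; fold f0.
    rewrite dyadic_exp_div_pow2, <- INR_pow2 by exact Hu_f0; fold (pow2_above_sqrt f0) u c.
    apply (sqrt_budget (sqrt (INR f0))); [exact Hr|lra|apply (le_INR 1); exact Hc| |exact Hdens].
    assert (Hnat : (f0 <= (c + 1) * u)%nat) by nia.
    apply le_INR in Hnat; rewrite mult_INR, plus_INR in Hnat; simpl INR in Hnat; lra.
Qed.
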